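(* Let $\Gamma\subseteq A$ be $\Bbbk$-algebras, $\sim$ an equivalence relation on $\mathrm{cfs}(\Gamma)$, and suppose $\Gamma$ is a strong Harish-Chandra block subalgebra of $A$ with respect to $\sim$. Let $F$ be a profinite $\mathcal A$-module. Then for $a\in A$ and $v\in F(B)$, the element $F_{B,C}((a))v$ is nonzero for only finitely many $C$, and $\mathcal H(F):=\bigoplus_{B}F(B)$ with the action $a.v:=\sum_CF_{B,C}((a))v$ (for $v\in F(B)$) is a Harish-Chandra block module. Furthermore, if $F$ is a discrete $\mathcal A$-module, then $\mathcal H(F)$ is a strong Harish-Chandra block module.
   Context: $\mathrm{cfs}(\Gamma)$: maximal two-sided ideals $\mathfrak m$ with $\dim\Gamma/\mathfrak m<\infty$. For a class $B$, $\mathcal W(B)=\{\mathfrak m_1\cdots\mathfrak m_k:k\ge0,\mathfrak m_i\in B\}$. For a left $\Gamma$-module $V$, $V(B)=\{v:\mathfrak mv=0$ for some $\mathfrak m\in\mathcal W(B)\}$ (right modules analogously); block module: $V=\bigoplus_BV(B)$; strong block module: additionally each $V(B)$ is killed by some $\mathfrak m\in\mathcal W(B)$. A (strong) Harish-Chandra block module is an $A$-module that is a (strong) block module over $\Gamma$. $\Gamma$ is a strong Harish-Chandra block subalgebra if for all $B$, $\mathfrak m\in\mathcal W(B)$, the left module $A/A\mathfrak m$ and the right module $A/\mathfrak mA$ are strong block modules. $\mathcal A$ is the category with objects $\mathrm{cfs}(\Gamma)/{\sim}$, morphisms $\mathcal A(B,C)=\varprojlim_{\mathfrak n\in\mathcal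 W(C),\mathfrak m\in\mathcal W(B)}A/(\mathfrak nA+A\mathfrak m)$, and composition defined by: for $\mathfrak m\in\mathcal W(B)$, $\mathfrak l\in\mathcal W(D)$ choose $\mathfrak n\in\mathcal W(C)$ with $A/(\mathfrak lA+A\mathfrak n)\cong(A/\mathfrak lA)(C)$ and $A/(\mathfrak nA+A\mathfrak m)\cong(A/A\mathfrak m)(C)$ naturally; pick representatives $a_0$ of $\alpha_{\mathfrak m,\mathfrak n}$ with $a_0+A\mathfrak m\in(A/A\mathfrak m)(C)$ and $b_0$ of $\beta_{\mathfrak n,\mathfrak l}$ with $b_0+\mathfrak lA\in(A/\mathfrak lA)(C)$; set $(\beta\circ\alpha)_{\mathfrak m,\mathfrak l}=b_0a_0+\mathfrak lA+A\mathfrak m$. $(a)$ denotes the image of $a\in A$ in $\mathcal A(B,C)$. $\mathcal A(B,C)$ carries the inverse limit topology of the discrete quotients; $\mathrm{Hom}_\Bbbk(V,W)$ carries either the discrete topology or the limit topology $\varprojlim_U\mathrm{Hom}_\Bbbk(U,W)$ over finite-dimensional $U\le V$ (each factor discrete). A profinite (resp. discrete) $\mathcal A$-module is a functor $F:\mathcal A\to\mathbf{Vect}_\Bbbk$ with each $F_{B,C}$ a continuous linear map for the limit (resp. discrete) topology. *)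

From HB Require Import structures.
From mathcomp Require Import all_boot all_algebra.
From mathcomp Require Import boolp classical_sets.
From Stdlib Require List.
Set Implicit Arguments.
Unset Strict Implicit.
Unset Printing Implicit Defensive.
Import GRing.Theory.
Local Open Scope ring_scope.
Local Open Scope classical_set_scope.

Section DFun.
Variables (k : fieldType) (I : Type) (Fo : I -> lmodType k).

Definition dfun := forall i, Fo i.
HB.instance Definition _ := Choice.on dfun.

Definition dfun0 : dfun := fun i => 0.
Definition dfunN (f : dfun) : dfun := fun i => - f i.
Definition dfunD (f g : dfun) : dfun := fun i => f i + g i.
Definition dfunZ (c : k) (f : dfun) : dfun := fun i => c *: f i.

Lemma dfunDA : associative dfunD.
Proof. by move=> f g h; apply: functional_extensionality_dep => i; rewrite /dfunD addrA. Qed.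
Lemma dfunDC : commutative dfunD.
Proof. by move=> f g; apply: functional_extensionality_dep => i; rewrite /dfunD addrC. Qed.
Lemma dfun0D : left_id dfun0 dfunD.
Proof. by move=> f; apply: functional_extensionality_dep => i; rewrite /dfunD /dfun0 add0r. Qed.
Lemma dfunND : left_inverse dfun0 dfunN dfunD.
Proof. by move=> f; apply: functional_extensionality_dep => i; rewrite /dfunD /dfunN /dfun0 addNr. Qed.
HB.instance Definition _ := GRing.isZmodule.Build dfun dfunDA dfunDC dfun0D dfunND.

Lemma dfunZA a b (f : dfun) : dfunZ a (dfunZ b f) = dfunZ (a * b) f.
Proof. by apply: functional_extensionality_dep => i; rewrite /dfunZ scalerA. Qed.
Lemma dfunZ1 : left_id 1 dfunZ.
Proof. by move=> f; apply: functional_extensionality_dep => i; rewrite /dfunZ scale1r. Qed.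
Lemma dfunZDr : right_distributive dfunZ +%R.
Proof. by move=> a f g; apply: functional_extensionality_dep => i; rewrite /dfunZ /= /dfunD scalerDr. Qed.
Lemma dfunZDl (f : dfun) : {morph dfunZ^~ f : a b / a + b}.
Proof. by move=> a b; apply: functional_extensionality_dep => i; rewrite /dfunZ /= /dfunD scalerDl. Qed.
HB.instance Definition _ :=
  GRing.Zmodule_isLmodule.Build k dfun dfunZA dfunZ1 dfunZDr dfunZDl.
End DFun.

Section Alg.
Variables (k : fieldType) (A : algType k).

Definition subalgebra (G : set A) : Prop :=
  [/\ G 1, (forall x y, G x -> G y -> G (x + y)),
      (forall x y, G x -> G y -> G (x * y)) &
      (forall (c : k) x, G x -> G (c *: x))].

Definition ideal2 (G I : set A) : Prop :=
  [/\ I `<=` G, I 0, (forall x y, I x -> I y -> I (x + y)),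
      (forall (c : k) x, I x -> I (c *: x)) &
      (forall g x, G g -> I x -> I (g * x) /\ I (x * g))].

Definition max_ideal2 (G I : set A) : Prop :=
  [/\ ideal2 G I, (exists g, G g /\ ~ I g) &
      (forall J, ideal2 G J -> I `<=` J -> J = I \/ J = G)].

Definition fin_codim (G I : set A) : Prop :=
  exists (n : nat) (e : 'I_n -> A), (forall i, G (e i)) /\
    forall g, G g -> exists c : 'I_n -> k, I (g - \sum_(i < n) c i *: e i).

Definition cfs (G : set A) (m : set A) : Prop := max_ideal2 G m /\ fin_codim G m.

Definition equiv_on_cfs (G : set A) (sim : set A -> set A -> Prop) : Prop :=
  [/\ (forall m, cfs G m -> sim m m),
      (forall m n, cfs G m -> cfs G n -> sim m n -> sim n m) &
      (forall m n l, cfs G m -> cfs G n -> cfs G l -> sim m n -> sim n l -> sim m l)].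

Definition is_class (G : set A) (sim : set A -> set A -> Prop) (B : set (set A)) : Prop :=
  exists m, cfs G m /\ B = [set n | cfs G n /\ sim m n].

Definition idealMul (I J : set A) : set A :=
  [set x | exists (n : nat) (u v : 'I_n -> A),
     [/\ (forall i, I (u i)), (forall i, J (v i)) & x = \sum_(i < n) u i * v i]].

(* W(B) = { m_1 ... m_k : k >= 0, m_i in B }  (empty product = Gamma) *)
Definition Wset (G : set A) (B : set (set A)) (m : set A) : Prop :=
  exists s : seq (set A), List.Forall B s /\ m = foldr idealMul G s.

(* m A  (right ideal of A generated by m) and  A m  (left ideal) *)
Definition lmulS (m : set A) : set A :=
  [set x | exists (n : nat) (u w : 'I_n -> A),
     (forall i, m (u i)) /\ x = \sum_(i < n) u i * w i].
Definition rmulS (m : set A) : set A :=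
  [set x | exists (n : nat) (u w : 'I_n -> A),
     (forall i, m (u i)) /\ x = \sum_(i < n) w i * u i].

Definition nAAm (n m : set A) : set A :=
  [set x | exists y z, [/\ lmulS n y, rmulS m z & x = y + z]].

(* Block modules.  A (left or right) Gamma-module is given by a k-vector      *)
(* space V with an action act : A -> V -> V (only g in Gamma is used here),   *)
(* considered on a subspace D of V and modulo a subspace N of V (so that the *)
(* quotient modules A/Am and A/mA and the direct sum H(F) are all covered).  *)
Variables (G : set A) (sim : set A -> set A -> Prop).

Definition bpart (V : lmodType k) (D N : set V) (act : A -> V -> V)
    (B : set (set A)) (v : V) : Prop :=
  D v /\ exists m, Wset G B m /\ forall g, m g -> N (act g v).

Definition block_mod (V : lmodType k) (D N : set V) (act : A -> V -> V) : Prop :=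
  (forall v, D v -> exists (n : nat) (Bs : 'I_n -> set (set A)) (vs : 'I_n -> V),
     [/\ (forall i, is_class G sim (Bs i)), injective Bs,
         (forall i, bpart D N act (Bs i) (vs i)) &
         N (v - \sum_(i < n) vs i)]) /\
  (forall (n : nat) (Bs : 'I_n -> set (set A)) (vs : 'I_n -> V),
     (forall i, is_class G sim (Bs i)) -> injective Bs ->
     (forall i, bpart D N act (Bs i) (vs i)) ->
     N (\sum_(i < n) vs i) -> forall i, N (vs i)).

Definition strong_block_mod (V : lmodType k) (D N : set V) (act : A -> V -> V) : Prop :=
  block_mod D N act /\
  forall B, is_class G sim B -> exists m, Wset G B m /\
    forall v, bpart D N act B v -> forall g, m g -> N (act g v).

Definition strong_HC_block_subalg : Prop :=
  forall B m, is_class G sim B -> Wset G B m ->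
    strong_block_mod (V := A) setT (rmulS m) (fun g x => g * x) /\
    strong_block_mod (V := A) setT (lmulS m) (fun g x => x * g).

Definition is_Amod (V : lmodType k) (D : set V) (act : A -> V -> V) : Prop :=
  [/\ (forall a v, D v -> D (act a v)),
      (forall a (c : k) v w, D v -> D w -> act a (c *: v + w) = c *: act a v + act a w),
      (forall a b (c : k) v, D v -> act (c *: a + b) v = c *: act a v + act b v),
      (forall v, D v -> act 1 v = v) &
      (forall a b v, D v -> act (a * b) v = act a (act b v))].

Definition HC_block_mod (V : lmodType k) (D : set V) (act : A -> V -> V) : Prop :=
  is_Amod D act /\ block_mod D (fun v => v = 0) act.
Definition strong_HC_block_mod (V : lmodType k) (D : set V) (act : A -> V -> V) : Prop :=
  is_Amod D act /\ strong_block_mod D (fun v => v = 0) act.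

(* The category  cA.  A morphism alpha in cA(B,C) is represented by a family *)
(* of representatives alpha m n in A of alpha_{m,n} in A/(nA + Am),          *)
(* m in W(B), n in W(C), compatible under the projections of the system.     *)
Definition mor := set A -> set A -> A.

Definition isMor (B C : set (set A)) (al : mor) : Prop :=
  forall m n m' n', Wset G B m -> Wset G C n -> Wset G B m' -> Wset G C n' ->
    m' `<=` m -> n' `<=` n -> nAAm n m (al m' n' - al m n).

(* equality in the inverse limit *)
Definition morEq (B C : set (set A)) (al be : mor) : Prop :=
  forall m n, Wset G B m -> Wset G C n -> nAAm n m (al m n - be m n).

Definition img (a : A) : mor := fun _ _ => a.

Definition partL (C : set (set A)) (m : set A) (x : A) : Prop :=
  bpart (V := A) setT (rmulS m) (fun g y => g * y) C x.
Definition partR (C : set (set A)) (l : set A) (x : A) : Prop :=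
  bpart (V := A) setT (lmulS l) (fun g y => y * g) C x.

Definition comp_rel (B C D : set (set A)) (al be ga : mor) : Prop :=
  forall m l, Wset G B m -> Wset G D l -> exists n, Wset G C n /\
    (* the natural map (A/lA)(C) -> A/(lA + An) is bijective *)
    (forall x, partR C l x -> nAAm l n x -> lmulS l x) /\
    (forall y, exists x, partR C l x /\ nAAm l n (y - x)) /\
    (* the natural map (A/Am)(C) -> A/(nA + Am) is bijective *)
    (forall x, partL C m x -> nAAm n m x -> rmulS m x) /\
    (forall y, exists x, partL C m x /\ nAAm n m (y - x)) /\
    forall a0 b0,
      nAAm n m (a0 - al m n) -> partL C m a0 ->
      nAAm l n (b0 - be n l) -> partR C l b0 ->
      nAAm l m (ga m l - b0 * a0).

Definition is_Amodule_functor (Fo : set (set A) -> lmodType k)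
    (Fm : forall B C, mor -> Fo B -> Fo C) : Prop :=
  [/\
      (forall B C al, is_class G sim B -> is_class G sim C -> isMor B C al ->
         forall (c : k) u v, Fm B C al (c *: u + v) = c *: Fm B C al u + Fm B C al v),
      (forall B C al be (c : k), is_class G sim B -> is_class G sim C ->
         isMor B C al -> isMor B C be ->
         forall v, Fm B C (fun m n => c *: al m n + be m n) v
                   = c *: Fm B C al v + Fm B C be v),
      (forall B C al be, is_class G sim B -> is_class G sim C ->
         isMor B C al -> isMor B C be -> morEq B C al be ->
         forall v, Fm B C al v = Fm B C be v),
      (forall B v, is_class G sim B -> Fm B B (img 1) v = v) &
      (forall B C D al be ga, is_class G sim B -> is_class G sim C -> is_class G sim D ->
         isMor B C al -> isMor C D be -> isMor B D ga -> comp_rel B C D al be ga ->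
         forall v, Fm B D ga v = Fm C D be (Fm B C al v))].

(* continuity for the limit topology on Hom_k(F(B),F(C)) *)
Definition profinite_module (Fo : set (set A) -> lmodType k)
    (Fm : forall B C, mor -> Fo B -> Fo C) : Prop :=
  is_Amodule_functor Fm /\
  forall B C al, is_class G sim B -> is_class G sim C -> isMor B C al ->
    forall (r : nat) (vs : 'I_r -> Fo B),
    exists s : seq (set A * set A),
      (forall p, List.In p s -> Wset G B p.1 /\ Wset G C p.2) /\
      forall be, isMor B C be ->
        (forall p, List.In p s -> nAAm p.2 p.1 (be p.1 p.2 - al p.1 p.2)) ->
        forall i, Fm B C be (vs i) = Fm B C al (vs i).

(* continuity for the discrete topology on Hom_k(F(B),F(C)) *)
Definition discrete_module (Fo : set (set A) -> lmodType k)
    (Fm : forall B C, mor -> Fo B -> Fo C) : Prop :=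
  is_Amodule_functor Fm /\
  forall B C al, is_class G sim B -> is_class G sim C -> isMor B C al ->
    exists s : seq (set A * set A),
      (forall p, List.In p s -> Wset G B p.1 /\ Wset G C p.2) /\
      forall be, isMor B C be ->
        (forall p, List.In p s -> nAAm p.2 p.1 (be p.1 p.2 - al p.1 p.2)) ->
        forall v, Fm B C be v = Fm B C al v.

(* the carrier of H(F) = (+)_B F(B) inside prod_B F(B) *)
Definition HF_carrier (Fo : set (set A) -> lmodType k) : set (dfun Fo) :=
  [set f | (forall B, ~ is_class G sim B -> f B = 0) /\
           exists s : seq (set (set A)), forall B, ~ List.In B s -> f B = 0].

End Alg.

(* Since W(B) and W(C) are comaximal for B <> C, the image [(g)] of g in Gamma
   vanishes off the diagonal of the category A.  As Gamma is a strong
   Harish-Chandra block subalgebra, for m in W(B) and l in W(D) some n in W(C)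
   annihilates both (A/Am)(C) and (A/lA)(C), which realises composition in A
   by products of representatives: F((x g)) = F((x)) F((g)) and
   F((g x)) = F((g)) F((x)) for g in Gamma.  Continuity of F gives, for each
   v in F(B), some m in W(B) with F((m)) v = 0.  Decomposing a in A into block
   components modulo A m then shows that F_{B,C}((a)) v vanishes for all but
   finitely many C, and decomposing at the finitely many ideals controlling
   F_{B,D}((a b)) gives (a b).v = a.(b.v).  The same ideals make each F(B) the
   block H(F)(B) of H(F), uniformly in v when F is discrete. *)

From HB Require Import structures.
From mathcomp Require Import all_boot all_algebra.
From mathcomp Require Import boolp classical_sets.
From Stdlib Require List.
Import GRing.Theory.
Local Open Scope ring_scope.
Local Open Scope classical_set_scope.
Set Implicit Arguments.
Unset Strict Implicit.
Unset Printing Implicit Defensive.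

Lemma In_mem (T : eqType) (x : T) (s : seq T) : List.In x s <-> x \in s.
Proof.
elim: s => [|y s IH] //=; rewrite in_cons; split.
- by case=> [->|/IH ->]; rewrite ?eqxx ?orbT.
- by case/orP=> [/eqP ->|/IH]; [left|right].
Qed.

Lemma sum_pick (V : zmodType) (T : eqType) (s : seq T) (c : T) (x : V) :
  uniq s -> c \in s -> \sum_(d <- s) (if c == d then x else 0) = x.
Proof.
move=> us cs; rewrite (bigD1_seq c) //= eqxx big1 ?addr0 // => d /negPf.
by rewrite eq_sym => ->.
Qed.

Lemma sum_ord_seqE (T : zmodType) (V : zmodType) (P : T -> T -> Prop)
    (f : T -> T -> V) (x : V) :
  (exists r (u w : 'I_r -> T), (forall i, P (u i) (w i)) /\
     x = \sum_(i < r) f (u i) (w i)) <->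
  (exists s : seq (T * T), (forall p, p \in s -> P p.1 p.2) /\
     x = \sum_(p <- s) f p.1 p.2).
Proof.
split=> [[r [u [w [Puw ->]]]]|[s [Ps ->]]].
- exists [seq (u i, w i) | i <- index_enum 'I_r]; rewrite big_map; split=> //.
  by move=> _ /mapP [i _ ->]; apply: Puw.
- exists (size s), (fun i => (nth (0, 0) s i).1), (fun i => (nth (0, 0) s i).2).
  by rewrite (big_nth (0, 0)) big_mkord; split=> // i; apply/Ps/mem_nth.
Qed.

Lemma subrACA (V : zmodType) (x y z t : V) : x - y - (z - t) = (x - z) - (y - t).
Proof. by rewrite !opprB addrACA [RHS]addrACA [- y - z]addrC. Qed.

Lemma subrBB (V : zmodType) (x y z : V) : (x - y) - (x - z) = z - y.
Proof. by rewrite opprB addrC addrA subrK. Qed.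

Lemma sum_uniq_sub (V : zmodType) (T : eqType) (s t : seq T) (F : T -> V) :
  uniq s -> uniq t -> {subset s <= t} -> (forall x, x \in t -> x \notin s -> F x = 0) ->
  \sum_(x <- s) F x = \sum_(x <- t) F x.
Proof.
move=> us ut st F0; rewrite [RHS](bigID (mem s)) /= [X in _ + X]big1_seq ?addr0.
  rewrite -[in RHS]big_filter; apply: perm_big; apply: uniq_perm; rewrite ?filter_uniq // => x.
  by rewrite mem_filter; apply/idP/andP => [xs|[]//]; split=> //; apply: st.
by move=> x /andP [xs xt]; apply: F0.
Qed.

Lemma cover_seq (T U : eqType) (Q : U -> Prop) (P : T -> seq U -> Prop) (ts : seq T) :
  (forall t, t \in ts -> exists2 S0 : seq U, (forall u, u \in S0 -> Q u) &
     forall S, {subset S0 <= S} -> P t S) ->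
  exists2 S0 : seq U, (forall u, u \in S0 -> Q u) &
    forall S, {subset S0 <= S} -> forall t, t \in ts -> P t S.
Proof.
elim: ts => [|t ts IH] Hts; first by exists [::].
have [S1 Q1 P1] := Hts t (mem_head _ _).
have [S2 Q2 P2] := IH (fun t' t'ts => Hts t' (mem_behead (s := t :: ts) t'ts)).
exists (S1 ++ S2) => [u|S S12 t']; first by rewrite mem_cat => /orP [/Q1|/Q2].
rewrite in_cons => /orP [/eqP ->|t'ts].
  by apply: P1 => u uS1; apply: S12; rewrite mem_cat uS1.
by apply: P2 => // u uS2; apply: S12; rewrite mem_cat uS2 orbT.
Qed.

Section ZmodSet.
Variable V : zmodType.

Definition zmod_set (P : set V) : Prop :=
  P 0 /\ forall x y, P x -> P y -> P (x - y).

Variables (P : set V) (hP : zmod_set P).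

Lemma zmod_set0 : P 0. Proof. by case: hP. Qed.

Lemma zmod_setB x y : P x -> P y -> P (x - y). Proof. by case: hP => _; apply. Qed.

Lemma zmod_setN x : P x -> P (- x).
Proof. by move=> Px; rewrite -sub0r; apply: zmod_setB => //; apply: zmod_set0. Qed.

Lemma zmod_setD x y : P x -> P y -> P (x + y).
Proof. by move=> Px Py; rewrite -[y]opprK; apply: zmod_setB => //; apply: zmod_setN. Qed.

Lemma zmod_set_sum (I : eqType) (s : seq I) (Q : pred I) (F : I -> V) :
  (forall i, i \in s -> Q i -> P (F i)) -> P (\sum_(i <- s | Q i) F i).
Proof.
move=> PF; rewrite big_seq_cond; apply: big_ind => [|x y|i /andP []]; last exact: PF.
  exact: zmod_set0.
exact: zmod_setD.
Qed.

End ZmodSet.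

Section Ideals.
Variables (k : fieldType) (A : algType k) (G : set A).
Hypothesis hG : subalgebra G.

Lemma subalg1 : G 1. Proof. by case: hG. Qed.

Lemma subalgM x y : G x -> G y -> G (x * y). Proof. by case: hG => _ _ + _; apply. Qed.

Lemma subalg_zmod : zmod_set G.
Proof.
case: hG => G1 GD _ GZ; split; first by rewrite -(scale0r 1); apply: GZ.
by move=> x y Gx Gy; apply: GD => //; rewrite -scaleN1r; apply: GZ.
Qed.

Section Ideal.
Variables (I : set A) (hI : ideal2 G I).

Lemma ideal_sub : I `<=` G. Proof. by case: hI. Qed.

Lemma idealZ c x : I x -> I (c *: x). Proof. by case: hI => _ _ _ + _; apply. Qed.

Lemma ideal_zmod : zmod_set I.
Proof.
case: hI => _ I0 ID _ _; split=> // x y Ix Iy.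
by apply: ID => //; rewrite -scaleN1r; apply: idealZ.
Qed.

Lemma idealMl g x : G g -> I x -> I (g * x).
Proof. by case: hI => _ _ _ _ IM Gg Ix; case: (IM _ _ Gg Ix). Qed.

Lemma idealMr g x : G g -> I x -> I (x * g).
Proof. by case: hI => _ _ _ _ IM Gg Ix; case: (IM _ _ Gg Ix). Qed.

End Ideal.

Lemma ideal_full : ideal2 G G.
Proof.
have [G0 GB] := subalg_zmod; case: hG => _ GD _ GZ.
by split=> // g x Gg Gx; split; apply: subalgM.
Qed.

Lemma idealMulE (I J : set A) x : idealMul I J x <->
  exists s : seq (A * A), (forall p, p \in s -> I p.1 /\ J p.2) /\
    x = \sum_(p <- s) p.1 * p.2.
Proof.
rewrite -(sum_ord_seqE (fun u w => I u /\ J w)); split.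
- by move=> [r [u [w [Iu Jw ->]]]]; exists r, u, w.
- by move=> [r [u [w [IJ ->]]]]; exists r, u, w; split=> // i; case: (IJ i).
Qed.

Lemma idealMul_ideal I J : ideal2 G I -> ideal2 G J -> ideal2 G (idealMul I J).
Proof.
move=> hI hJ; have [I0 IB] := ideal_zmod hI.
split.
- move=> _ /idealMulE [s [IJs ->]]; apply: (zmod_set_sum subalg_zmod) => p /IJs [Ip Jp] _.
  by apply: subalgM; [apply: (ideal_sub hI Ip) | apply: (ideal_sub hJ Jp)].
- by apply/idealMulE; exists [::]; rewrite big_nil.
- move=> _ _ /idealMulE [s1 [IJ1 ->]] /idealMulE [s2 [IJ2 ->]]; apply/idealMulE.
  by exists (s1 ++ s2); rewrite big_cat; split=> // p; rewrite mem_cat => /orP [/IJ1|/IJ2].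
- move=> c _ /idealMulE [s [IJs ->]]; apply/idealMulE.
  exists [seq (c *: p.1, p.2) | p <- s]; rewrite big_map scaler_sumr; split.
  + by move=> _ /mapP [p /IJs [Ip Jp] ->]; split=> //; apply: idealZ.
  + by apply: eq_bigr => p _; rewrite scalerAl.
- move=> g _ Gg /idealMulE [s [IJs ->]]; split; apply/idealMulE.
  + exists [seq (g * p.1, p.2) | p <- s]; rewrite big_map mulr_sumr; split.
    * by move=> _ /mapP [p /IJs [Ip Jp] ->]; split=> //; apply: idealMl.
    * by apply: eq_bigr => p _; rewrite mulrA.
  + exists [seq (p.1, p.2 * g) | p <- s]; rewrite big_map mulr_suml; split.
    * by move=> _ /mapP [p /IJs [Ip Jp] ->]; split=> //; apply: idealMr.
    * by apply: eq_bigr => p _; rewrite mulrA.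
Qed.

Lemma idealMul_subr I J : I `<=` G -> ideal2 G J -> idealMul I J `<=` J.
Proof.
move=> IG hJ _ /idealMulE [s [IJs ->]]; apply: (zmod_set_sum (ideal_zmod hJ)).
by move=> p /IJs [Ip Jp] _; apply: idealMl => //; apply: IG.
Qed.

Lemma idealMul_mono (I J J' : set A) : J `<=` J' -> idealMul I J `<=` idealMul I J'.
Proof.
move=> JJ' _ /idealMulE [s [IJs ->]]; apply/idealMulE; exists s; split=> // p.
by move=> /IJs [Ip Jp]; split=> //; apply: JJ'.
Qed.

Lemma foldr_idealMul_ideal (s : seq (set A)) X :
  (forall I, I \in s -> ideal2 G I) -> ideal2 G X -> ideal2 G (foldr (@idealMul _ A) X s).
Proof.
elim: s => [|I s IH] //= hs hX; apply: idealMul_ideal; first by apply: hs; rewrite mem_head.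
by apply: IH => // J Js; apply: hs; rewrite in_cons Js orbT.
Qed.

Lemma foldr_idealMul_sub (s : seq (set A)) X :
  (forall I, I \in s -> ideal2 G I) -> ideal2 G X -> foldr (@idealMul _ A) X s `<=` X.
Proof.
elim: s => [|I s IH] hs hX x //=.
have hs' J : J \in s -> ideal2 G J by move=> Js; apply: hs; rewrite in_cons Js orbT.
move/idealMul_subr => Hx; apply: IH => //; apply: Hx; last exact: foldr_idealMul_ideal.
by apply: ideal_sub; apply: hs; rewrite mem_head.
Qed.

Lemma foldr_idealMul_mono (s : seq (set A)) (X Y : set A) :
  X `<=` Y -> foldr (@idealMul _ A) X s `<=` foldr (@idealMul _ A) Y s.
Proof. by elim: s => [|I s IH] //= XY; apply/idealMul_mono/IH. Qed.

Definition comaximal (I J : set A) := exists p q, [/\ I p, J q & p + q = 1].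

Lemma comaximal_sym I J : comaximal I J -> comaximal J I.
Proof. by move=> [p [q [Ip Jq pq1]]]; exists q, p; rewrite addrC. Qed.

Lemma comaximalM I J1 J2 : ideal2 G I -> J1 `<=` G ->
  comaximal I J1 -> comaximal I J2 -> comaximal I (idealMul J1 J2).
Proof.
move=> hI J1G [p1 [q1 [Ip1 Jq1 E1]]] [p2 [q2 [Ip2 Jq2 E2]]].
exists (p1 + q1 * p2), (q1 * q2); split.
- by apply: (zmod_setD (ideal_zmod hI) Ip1); apply: idealMl => //; apply: J1G.
- by apply/idealMulE; exists [:: (q1, q2)]; rewrite big_seq1; split=> // p; rewrite inE => /eqP ->.
- by rewrite -addrA -mulrDr E2 mulr1.
Qed.

Lemma comaximal_foldr I s : ideal2 G I ->
  (forall J, J \in s -> J `<=` G /\ comaximal I J) ->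
  comaximal I (foldr (@idealMul _ A) G s).
Proof.
move=> hI; elim: s => [|J s IH] Hs /=.
  by exists 0, 1; rewrite add0r; split=> //; [apply: (ideal_zmod hI).1 | apply: subalg1].
have [JG IJ] := Hs J (mem_head _ _).
by apply: comaximalM => //; apply: IH => J' J's; apply: Hs; rewrite in_cons J's orbT.
Qed.

Lemma max_ideal_comaximal I J : max_ideal2 G I -> max_ideal2 G J -> I <> J ->
  comaximal I J.
Proof.
move=> [hI [g [Gg nIg]] maxI] [hJ _ maxJ] nIJ.
have [I0 IB] := ideal_zmod hI; have [J0 JB] := ideal_zmod hJ.
pose S := [set x | exists y z, [/\ I y, J z & x = y + z]].
have hS : ideal2 G S.
  split.
  - move=> _ [y [z [Iy Jz ->]]]; apply: (zmod_setD subalg_zmod).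
      exact: (ideal_sub hI Iy).
    exact: (ideal_sub hJ Jz).
  - by exists 0, 0; rewrite addr0.
  - move=> _ _ [y [z [Iy Jz ->]]] [y' [z' [Iy' Jz' ->]]]; exists (y + y'), (z + z').
    by rewrite addrACA; split=> //; apply: zmod_setD.
  - move=> c _ [y [z [Iy Jz ->]]]; exists (c *: y), (c *: z).
    by rewrite scalerDr; split=> //; apply: idealZ.
  - move=> h _ Gh [y [z [Iy Jz ->]]]; split.
    + by exists (h * y), (h * z); rewrite mulrDr; split=> //; apply: idealMl.
    + by exists (y * h), (z * h); rewrite mulrDl; split=> //; apply: idealMr.
have IS : I `<=` S by move=> x Ix; exists x, 0; rewrite addr0.
have JS : J `<=` S by move=> x Jx; exists 0, x; rewrite add0r.
case: (maxI _ hS IS) => [SI|SG].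
  case: (maxJ _ hI); first by rewrite -SI.
    by move=> JI; case: nIJ.
  by move=> IG; case: nIg; rewrite IG.
have : S 1 by rewrite SG; apply: subalg1.
by move=> [y [z [Iy Jz E]]]; exists y, z.
Qed.

End Ideals.

Section OneSidedIdeals.
Variables (k : fieldType) (A : algType k).
Implicit Types (l m n : set A) (x y : A).

Lemma lmulSE m x : lmulS m x <->
  exists s : seq (A * A), (forall p, p \in s -> m p.1) /\ x = \sum_(p <- s) p.1 * p.2.
Proof. exact: (sum_ord_seqE (fun u _ => m u) (fun u w => u * w)). Qed.

Lemma rmulSE m x : rmulS m x <->
  exists s : seq (A * A), (forall p, p \in s -> m p.1) /\ x = \sum_(p <- s) p.2 * p.1.
Proof. exact: (sum_ord_seqE (fun u _ => m u) (fun u w => w * u)). Qed.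

Lemma lmulS_zmod m : zmod_set (lmulS m).
Proof.
split=> [|_ _ /lmulSE [s1 [m1 ->]] /lmulSE [s2 [m2 ->]]].
  by apply/lmulSE; exists [::]; rewrite big_nil.
apply/lmulSE; exists (s1 ++ [seq (p.1, - p.2) | p <- s2]).
rewrite big_cat big_map -sumrN; split.
  by move=> p; rewrite mem_cat => /orP [/m1 //|/mapP [q /m2 mq ->]].
by congr (_ + _); apply: eq_bigr => p _; rewrite mulrN.
Qed.

Lemma rmulS_zmod m : zmod_set (rmulS m).
Proof.
split=> [|_ _ /rmulSE [s1 [m1 ->]] /rmulSE [s2 [m2 ->]]].
  by apply/rmulSE; exists [::]; rewrite big_nil.
apply/rmulSE; exists (s1 ++ [seq (p.1, - p.2) | p <- s2]).
rewrite big_cat big_map -sumrN; split.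
  by move=> p; rewrite mem_cat => /orP [/m1 //|/mapP [q /m2 mq ->]].
by congr (_ + _); apply: eq_bigr => p _; rewrite mulNr.
Qed.

Lemma lmulSMr m a x : lmulS m x -> lmulS m (x * a).
Proof.
move=> /lmulSE [s [ms ->]]; apply/lmulSE; exists [seq (p.1, p.2 * a) | p <- s].
rewrite big_map mulr_suml; split; first by move=> _ /mapP [p /ms mp ->].
by apply: eq_bigr => p _; rewrite mulrA.
Qed.

Lemma rmulSMl m a x : rmulS m x -> rmulS m (a * x).
Proof.
move=> /rmulSE [s [ms ->]]; apply/rmulSE; exists [seq (p.1, a * p.2) | p <- s].
rewrite big_map mulr_sumr; split; first by move=> _ /mapP [p /ms mp ->].
by apply: eq_bigr => p _; rewrite mulrA.
Qed.

Lemma lmulS_sub m x : m x -> lmulS m x.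
Proof.
move=> mx; apply/lmulSE; exists [:: (x, 1)]; rewrite big_seq1 mulr1.
by split=> // p /[!inE] /eqP ->.
Qed.

Lemma rmulS_sub m x : m x -> rmulS m x.
Proof.
move=> mx; apply/rmulSE; exists [:: (x, 1)]; rewrite big_seq1 mul1r.
by split=> // p /[!inE] /eqP ->.
Qed.

Lemma rmulS_mono m m' : m `<=` m' -> rmulS m `<=` rmulS m'.
Proof. by move=> mm' _ /rmulSE [s [ms ->]]; apply/rmulSE; exists s; split=> // p /ms /mm'. Qed.

Lemma nAAm_zmod n m : zmod_set (nAAm n m).
Proof.
have [L0 LB] := lmulS_zmod n; have [R0 RB] := rmulS_zmod m.
split; first by exists 0, 0; rewrite addr0.
move=> _ _ [y1 [z1 [Ly1 Rz1 ->]]] [y2 [z2 [Ly2 Rz2 ->]]].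
by exists (y1 - y2), (z1 - z2); rewrite opprD addrACA; split; [apply: LB|apply: RB|].
Qed.

Lemma nAAm_l n m x : lmulS n x -> nAAm n m x.
Proof. by move=> Lx; exists x, 0; rewrite addr0; split=> //; apply: (rmulS_zmod m).1. Qed.

Lemma nAAm_r n m x : rmulS m x -> nAAm n m x.
Proof. by move=> Rx; exists 0, x; rewrite add0r; split=> //; apply: (lmulS_zmod n).1. Qed.

Lemma nAAmMr l n m z a : (forall g, n g -> rmulS m (g * a)) ->
  nAAm l n z -> nAAm l m (z * a).
Proof.
move=> na [y [_ [Ly /rmulSE [s [ns ->]] ->]]]; rewrite mulrDl.
apply: (zmod_setD (nAAm_zmod l m) (nAAm_l _ (lmulSMr _ Ly))).
apply: nAAm_r; rewrite mulr_suml; apply: (zmod_set_sum (rmulS_zmod m)) => p sp _.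
by rewrite -mulrA; apply/rmulSMl/na/ns.
Qed.

Lemma nAAmMl l n m z b : (forall g, n g -> lmulS l (b * g)) ->
  nAAm n m z -> nAAm l m (b * z).
Proof.
move=> bn [_ [y [/lmulSE [s [ns ->]] Ry ->]]]; rewrite mulrDr.
apply: (zmod_setD (nAAm_zmod l m) _ (nAAm_r _ (rmulSMl _ Ry))).
apply: nAAm_l; rewrite mulr_sumr; apply: (zmod_set_sum (lmulS_zmod l)) => p sp _.
by rewrite mulrA; apply/lmulSMr/bn/ns.
Qed.

End OneSidedIdeals.

(* [act] is an action of [G] on [V] modulo [N], composed through [mul]; it
   covers both [A/Am] with left multiplication ([mul g h = h * g]) and [A/lA]
   with right multiplication ([mul g h = g * h]). *)
Record is_action_mod (k : fieldType) (A : algType k) (G : set A) (V : lmodType k)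
    (N : set V) (act : A -> V -> V) (mul : A -> A -> A) : Prop := {
  action_zmod : zmod_set N;
  action_N : forall g x, G g -> N x -> N (act g x);
  action_additive : forall g, zmod_morphism (act g);
  actionDl : forall g h x, act (g + h) x = act g x + act h x;
  action1 : forall x, act 1 x = x;
  actionA : forall g h x, act h (act g x) = act (mul g h) x;
  action_ideal : forall I g h, ideal2 G I -> G g -> I h -> I (mul g h) }.

Lemma left_action_mod (k : fieldType) (A : algType k) (G m : set A) :
  is_action_mod G (rmulS m) (fun g x => g * x) (fun g h => h * g).
Proof.
split.
- exact: rmulS_zmod.
- by move=> g x _; apply: rmulSMl.
- by move=> g x y; rewrite mulrBr.
- by move=> g h x; rewrite mulrDl.
- exact: mul1r.
- by move=> g h x; rewrite mulrA.
- move=> I g h hI Gg Ih; exact: (idealMr hI Gg Ih).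
Qed.

Lemma right_action_mod (k : fieldType) (A : algType k) (G l : set A) :
  is_action_mod G (lmulS l) (fun g x => x * g) (fun g h => g * h).
Proof.
split.
- exact: lmulS_zmod.
- by move=> g x _; apply: lmulSMr.
- by move=> g x y; rewrite mulrBl.
- by move=> g h x; rewrite mulrDr.
- exact: mulr1.
- by move=> g h x; rewrite mulrA.
- move=> I g h hI Gg Ih; exact: (idealMl hI Gg Ih).
Qed.

Section Blocks.
Variables (k : fieldType) (A : algType k) (G : set A) (sim : set A -> set A -> Prop).
Hypotheses (hG : subalgebra G) (hsim : equiv_on_cfs G sim).

Notation cls := (is_class G sim).
Notation W := (Wset G).

Lemma class_max_ideal B I : cls B -> B I -> max_ideal2 G I.
Proof. by move=> [m [_ ->]] [[]]. Qed.

Lemma class_ideal B I : cls B -> B I -> ideal2 G I.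
Proof. by move=> hB /(class_max_ideal hB) []. Qed.

Lemma class_eq B C I : cls B -> cls C -> B I -> C I -> B = C.
Proof.
case: hsim => _ symm trans [b [cb ->]] [c [cc ->]] [cfsI bI] [_ cI].
have bc : sim b c := trans _ _ _ cb cfsI cc bI (symm _ _ cc cfsI cI).
have cb' : sim c b := symm _ _ cb cc bc.
apply/seteqP; split=> x [cx Hx]; split=> //.
  exact: (trans _ _ _ cc cb cx cb' Hx).
exact: (trans _ _ _ cb cc cx bc Hx).
Qed.

Lemma WsetE B m : W B m <->
  exists s, (forall I, I \in s -> B I) /\ m = foldr (@idealMul _ A) G s.
Proof.
split=> [[s [/List.Forall_forall Bs ->]]|[s [Bs ->]]]; exists s; split=> //.
  by move=> I /In_mem; apply: Bs.
by apply/List.Forall_forall => I /In_mem; apply: Bs.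
Qed.

Lemma Wset_full B : W B G.
Proof. by apply/WsetE; exists [::]. Qed.

Lemma Wset_ideal B m : cls B -> W B m -> ideal2 G m.
Proof.
move=> hB /WsetE [s [Bs ->]]; apply: (foldr_idealMul_ideal hG _ (ideal_full hG)).
by move=> I /Bs; apply: class_ideal.
Qed.

Lemma Wset_sub B m : cls B -> W B m -> m `<=` G.
Proof. by move=> hB Wm; apply: (ideal_sub (Wset_ideal hB Wm)). Qed.

Lemma Wset_meet B m1 m2 : cls B -> W B m1 -> W B m2 ->
  exists m, [/\ W B m, m `<=` m1 & m `<=` m2].
Proof.
move=> hB /WsetE [s1 [B1 ->]] /WsetE [s2 [B2 ->]].
have hs1 I : I \in s1 -> ideal2 G I by move/B1; apply: class_ideal.
have hs2 I : I \in s2 -> ideal2 G I by move/B2; apply: class_ideal.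
exists (foldr (@idealMul _ A) G (s1 ++ s2)); rewrite foldr_cat; split.
- rewrite -foldr_cat; apply/WsetE; exists (s1 ++ s2); split=> // I.
  by rewrite mem_cat => /orP [/B1|/B2].
- exact/foldr_idealMul_mono/(foldr_idealMul_sub hG hs2 (ideal_full hG)).
- exact: (foldr_idealMul_sub hG hs1 (foldr_idealMul_ideal hG hs2 (ideal_full hG))).
Qed.

Lemma Wset_meet_seq B (ms : seq (set A)) : cls B -> (forall m, m \in ms -> W B m) ->
  exists m, W B m /\ forall m', m' \in ms -> m `<=` m'.
Proof.
move=> hB; elim: ms => [|m0 ms IH] Wms; first by exists G; split=> //; apply: Wset_full.
have [m [Wm mms]] := IH (fun m' m's => Wms m' (mem_behead (s := m0 :: ms) m's)).
have [m' [Wm' m'm m'm0]] := Wset_meet hB Wm (Wms m0 (mem_head _ _)).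
exists m'; split=> // m''; rewrite in_cons => /orP [/eqP ->|/mms mm''] //.
by move=> x /m'm /mm''.
Qed.

Lemma Wset_comaximal B C m n : cls B -> cls C -> B <> C -> W B m -> W C n ->
  comaximal m n.
Proof.
move=> hB hC BC /WsetE [s [Bs ->]] /WsetE [t [Ct ->]].
have hs I : I \in s -> ideal2 G I by move/Bs; apply: class_ideal.
have ht J : J \in t -> ideal2 G J by move/Ct; apply: class_ideal.
apply: comaximal_sym; apply: (comaximal_foldr hG) => //.
  by apply: (foldr_idealMul_ideal hG) => //; apply: ideal_full.
move=> I Is; split; first exact: (ideal_sub (hs I Is)).
apply: comaximal_sym; apply: (comaximal_foldr hG) => //; first exact: hs.
move=> J Jt; split; first exact: (ideal_sub (ht J Jt)).
apply: (max_ideal_comaximal hG).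
- exact: (class_max_ideal hB (Bs _ Is)).
- exact: (class_max_ideal hC (Ct _ Jt)).
-
  by move=> IJ; apply: BC; apply: (class_eq hB hC (Bs _ Is)); rewrite IJ; apply: Ct.
Qed.

Section BlockComponents.
Variables (V : lmodType k) (N : set V) (act : A -> V -> V) (mul : A -> A -> A).
Hypothesis hact : is_action_mod G N act mul.
Let hN : zmod_set N := action_zmod hact.

HB.instance Definition _ g := GRing.isZmodMorphism.Build V V (act g) (action_additive hact g).

Notation part C := (bpart G (V := V) setT N act C).

Definition coblock (C : set (set A)) (x : V) : Prop :=
  exists s : seq (set (set A) * V),
    (forall p, p \in s -> [/\ cls p.1, p.1 <> C & part p.1 p.2]) /\
    N (x - \sum_(p <- s) p.2).

Definition actspan (n : set A) (x : V) : Prop :=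
  exists s : seq (A * V), (forall p, p \in s -> n p.1) /\
    x = \sum_(p <- s) act p.1 p.2.

Lemma part_N C x : N x -> part C x.
Proof.
by move=> Nx; split=> //; exists G; split=> [|g Gg]; [apply: Wset_full|apply: (action_N hact)].
Qed.

Lemma part_zmod C : cls C -> zmod_set (part C).
Proof.
move=> hC; split=> [|x y [_ [m1 [W1 K1]]] [_ [m2 [W2 K2]]]]; first exact/part_N/(zmod_set0 hN).
have [m [Wm m1m m2m]] := Wset_meet hC W1 W2.
split=> //; exists m; split=> // g mg; rewrite raddfB.
by apply: (zmod_setB hN); [apply/K1/m1m|apply/K2/m2m].
Qed.

Lemma part_act C g x : cls C -> G g -> part C x -> part C (act g x).
Proof.
move=> hC Gg [_ [m [Wm K]]]; split=> //; exists m; split=> // h mh.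
by rewrite (actionA hact); apply: K; apply: (action_ideal hact (Wset_ideal hC Wm)).
Qed.

Lemma coblock_N C x : N x -> coblock C x.
Proof. by move=> Nx; exists [::]; rewrite big_nil subr0. Qed.

Lemma coblock_part C C' x : cls C' -> C' <> C -> part C' x -> coblock C x.
Proof.
move=> hC' C'C Px; exists [:: (C', x)]; rewrite big_seq1 subrr; split; last exact: (zmod_set0 hN).
by move=> p /[!inE] /eqP ->.
Qed.

Lemma coblock_zmod C : zmod_set (coblock C).
Proof.
split=> [|x y [s1 [H1 N1]] [s2 [H2 N2]]]; first exact/coblock_N/(zmod_set0 hN).
exists (s1 ++ [seq (p.1, - p.2) | p <- s2]); split.
  move=> p; rewrite mem_cat => /orP [/H1 //|/mapP [q /H2 [hq qC Pq] ->]].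
  by split=> //; apply: (zmod_setN (part_zmod hq) Pq).
rewrite big_cat big_map sumrN /=.
by rewrite subrACA; apply: (zmod_setB hN).
Qed.

Lemma coblock_act C g x : G g -> coblock C x -> coblock C (act g x).
Proof.
move=> Gg [s [Hs Ns]]; exists [seq (p.1, act g p.2) | p <- s]; split.
  by move=> _ /mapP [p /Hs [hp pC Pp] ->]; split=> //; apply: part_act.
by rewrite big_map -raddf_sum -raddfB; apply: (action_N hact).
Qed.

Lemma actspan_zmod n : zmod_set (actspan n).
Proof.
split=> [|_ _ [s1 [n1 ->]] [s2 [n2 ->]]]; first by exists [::]; rewrite big_nil.
exists (s1 ++ [seq (p.1, - p.2) | p <- s2]); rewrite big_cat big_map -sumrN; split.
  by move=> p; rewrite mem_cat => /orP [/n1 //|/mapP [q /n2 nq ->]].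
by congr (_ + _); apply: eq_bigr => p _; rewrite raddfN.
Qed.

(* Blocks other than [C] are killed by ideals comaximal with [n], so they lie
   in [n V + N]. *)
Lemma coblock_actspan C n q : cls C -> W C n -> coblock C q ->
  exists2 y, actspan n y & N (q - y).
Proof.
move=> hC Wn [s [Hs Ns]].
pose P q := exists2 y, actspan n y & N (q - y).
have S0 : actspan n 0 := zmod_set0 (actspan_zmod n).
have P0 : P 0 by exists 0; rewrite ?subr0 //; apply: (zmod_set0 hN).
have hP : zmod_set P.
  split=> // x x' [y1 S1 N1] [y2 S2 N2]; exists (y1 - y2).
    exact: (zmod_setB (actspan_zmod n) S1 S2).
  by rewrite subrACA; apply: (zmod_setB hN).
rewrite -(subrK (\sum_(p <- s) p.2) q); apply: (zmod_setD hP).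
  by exists 0; rewrite ?subr0.
apply: (zmod_set_sum hP) => p /Hs [hD DC [_ [m [Wm K]]]] _.
have [a [b [na mb ab1]]] := Wset_comaximal hC hD (nesym DC) Wn Wm.
exists (act a p.2); first by exists [:: (a, p.2)]; rewrite big_seq1; split=> // r /[!inE] /eqP ->.
by rewrite -{1}(action1 hact p.2) -ab1 (actionDl hact) addrAC subrr add0r; apply: K.
Qed.

Section DirectSum.
Hypothesis hblock : block_mod G sim (V := V) setT N act.

Lemma block_sum_N (s : seq (set (set A) * V)) :
  (forall p, p \in s -> cls p.1 /\ part p.1 p.2) -> N (\sum_(p <- s) p.2) ->
  forall C, N (\sum_(p <- s | p.1 == C) p.2).
Proof.
move=> Hs Nsum C; have [_ uniqB] := hblock.
set u := undup [seq p.1 | p <- s].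
pose Bs (j : 'I_(size u)) := nth set0 u j.
pose w j := \sum_(p <- s | p.1 == Bs j) p.2.
have hBs j : cls (Bs j).
  by rewrite /Bs; have := mem_nth set0 (ltn_ord j); rewrite mem_undup => /mapP [p /Hs [hp _] ->].
have injBs : injective Bs.
  by move=> i j /eqP; rewrite nth_uniq ?undup_uniq // => /eqP /val_inj.
have Pw j : part (Bs j) (w j).
  by apply: (zmod_set_sum (part_zmod (hBs j))) => p /Hs [] ? ? /eqP <-.
have sum_w : \sum_(j < size u) w j = \sum_(p <- s) p.2.
  rewrite /w -(big_mkord xpredT (fun j => \sum_(p <- s | p.1 == nth set0 u j) p.2)).
  rewrite -(big_nth set0 xpredT (fun B => \sum_(p <- s | p.1 == B) p.2)).
  under eq_bigr do rewrite big_mkcond; rewrite exchange_big /=.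
  apply: eq_big_seq => p ps; apply: sum_pick; first exact: undup_uniq.
  by rewrite mem_undup; apply: map_f.
have Nw := uniqB _ Bs w hBs injBs Pw (eq_ind_r N Nsum sum_w).
case Cu: (C \in u).
  by have := Nw (Ordinal (etrans (index_mem C u) Cu)); rewrite /w /Bs /= nth_index.
rewrite big_seq_cond big1; first exact: (zmod_set0 hN).
by move=> p /andP [ps /eqP pC]; move: Cu; rewrite -pC mem_undup map_f.
Qed.

Lemma part_coblock_N C x : cls C -> part C x -> coblock C x -> N x.
Proof.
move=> hC Px [s [Hs Ns]].
pose s' := (C, x) :: [seq (p.1, - p.2) | p <- s].
have Hs' p : p \in s' -> cls p.1 /\ part p.1 p.2.
  rewrite inE => /orP [/eqP -> //|/mapP [q /Hs [hq _ Pq] ->]].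
  by split=> //; apply: (zmod_setN (part_zmod hq) Pq).
have Ns' : N (\sum_(p <- s') p.2) by rewrite big_cons big_map sumrN.
have := block_sum_N Hs' Ns' C; rewrite big_cons eqxx big_map big1_seq ?addr0 //.
by move=> p /andP [/eqP pC /Hs [_ pC' _]].
Qed.

Lemma block_decomp C y : cls C -> exists x, part C x /\ coblock C (y - x).
Proof.
move=> hC; have [/(_ y I) [n [Bs [vs [hBs _ Pvs Ny]]]] _] := hblock.
exists (\sum_(i < n | Bs i == C) vs i); split.
  by apply: (zmod_set_sum (part_zmod hC)) => i _ /eqP <-.
exists [seq (Bs i, vs i) | i <- index_enum 'I_n & Bs i != C]; split.
  move=> p /mapP [i]; rewrite mem_filter => /andP [/eqP iC _] ->.
  by split; [apply: hBs | | apply: Pvs].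
by move: Ny; rewrite big_map big_filter -addrA -opprD (bigID (fun i => Bs i == C)).
Qed.

Lemma part_actspan_N C n x y : cls C -> n `<=` G ->
  (forall z, part C z -> forall g, n g -> N (act g z)) ->
  part C x -> actspan n y -> N (x - y) -> N x.
Proof.
move=> hC nG nkill Px [s [ns Ey]] Nxy; apply: (part_coblock_N hC Px).
have Qy : coblock C y.
  rewrite Ey; apply: (zmod_set_sum (coblock_zmod C)) => p /ns np _.
  have [z [Pz Qz]] := block_decomp p.2 hC.
  rewrite -(subrK z p.2) raddfD; apply: (zmod_setD (coblock_zmod C)).
    exact: (coblock_act (nG _ np) Qz).
  exact/coblock_N/nkill.
rewrite -(subrK y x); apply: (zmod_setD (coblock_zmod C) _ Qy).
exact: coblock_N.
Qed.

End DirectSum.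
End BlockComponents.

Section StrongBlockSubalgebra.
Hypothesis hstrong : strong_HC_block_subalg G sim.

Notation coblockL m := (coblock (rmulS m) (fun g x => g * x)).
Notation coblockR l := (coblock (lmulS l) (fun g x => x * g)).

Lemma blockL B m : cls B -> W B m ->
  block_mod G sim (V := A) setT (rmulS m) (fun g x => g * x).
Proof. by move=> hB Wm; case: (hstrong hB Wm) => [[]]. Qed.

Lemma blockR B l : cls B -> W B l ->
  block_mod G sim (V := A) setT (lmulS l) (fun g x => x * g).
Proof. by move=> hB Wl; case: (hstrong hB Wl) => _ []. Qed.

Lemma blockL_decomp B m x : cls B -> W B m ->
  exists n (Bs : 'I_n -> set (set A)) (vs : 'I_n -> A),
    [/\ forall i, cls (Bs i), forall i, partL G (Bs i) m (vs i) &
        rmulS m (x - \sum_(i < n) vs i)].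
Proof.
move=> hB Wm; have [/(_ x I) [n [Bs [vs [hBs _ Pvs Nx]]]] _] := blockL hB Wm.
by exists n, Bs, vs.
Qed.

Lemma partL_zmod C m : cls C -> zmod_set (partL G C m).
Proof. exact: (part_zmod (left_action_mod G m)). Qed.

Lemma partR_zmod C l : cls C -> zmod_set (partR G C l).
Proof. exact: (part_zmod (right_action_mod G l)). Qed.

Lemma partL_mono C m m' x : m' `<=` m -> partL G C m' x -> partL G C m x.
Proof. by move=> m'm [_ [n [Wn K]]]; split=> //; exists n; split=> // g /K /(rmulS_mono m'm). Qed.

Lemma partL_subalg C m g : cls C -> W C m -> G g -> partL G C m g.
Proof.
move=> hC Wm Gg; split=> //; exists m; split=> // h mh.
exact/rmulS_sub/(idealMr (Wset_ideal hC Wm)).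
Qed.

Lemma partR_subalg C l g : cls C -> W C l -> G g -> partR G C l g.
Proof.
move=> hC Wl Gg; split=> //; exists l; split=> // h lh.
exact/lmulS_sub/(idealMl (Wset_ideal hC Wl)).
Qed.

Lemma coblockL_mono C m m' x : m' `<=` m -> coblockL m' C x -> coblockL m C x.
Proof.
move=> m'm [s [Hs Ns]]; exists s; split; last exact: (rmulS_mono m'm Ns).
by move=> p /Hs [hp pC Pp]; split=> //; apply: (partL_mono m'm Pp).
Qed.

Lemma partL_coblockL_rmulS B C m x : cls B -> W B m -> cls C ->
  partL G C m x -> coblockL m C x -> rmulS m x.
Proof. by move=> hB Wm; apply: (part_coblock_N (left_action_mod G m) (blockL hB Wm)). Qed.

Lemma block_decompL B C m y : cls B -> W B m -> cls C ->
  exists x, partL G C m x /\ coblockL m C (y - x).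
Proof. by move=> hB Wm; apply: (block_decomp (left_action_mod G m) (blockL hB Wm) y). Qed.

Lemma coblockL_nAAm C m n q : cls C -> W C n -> coblockL m C q -> nAAm n m q.
Proof.
move=> hC Wn /(coblock_actspan (left_action_mod G m) hC Wn) [y [s [ns ->]] Nqy].
exists (\sum_(p <- s) p.1 * p.2), (q - \sum_(p <- s) p.1 * p.2); rewrite subrKC.
by split=> //; apply/lmulSE; exists s.
Qed.

Lemma coblockR_nAAm C l n q : cls C -> W C n -> coblockR l C q -> nAAm l n q.
Proof.
move=> hC Wn /(coblock_actspan (right_action_mod G l) hC Wn) [y [s [ns ->]] Nqy].
exists (q - \sum_(p <- s) p.2 * p.1), (\sum_(p <- s) p.2 * p.1); rewrite subrK.
by split=> //; apply/rmulSE; exists s.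
Qed.

(* Such an [n] is the middle ideal realising composition in [A] through [C]. *)
Definition annihilates (C : set (set A)) (m l n : set A) : Prop :=
  (forall x, partL G C m x -> forall g, n g -> rmulS m (g * x)) /\
  (forall x, partR G C l x -> forall g, n g -> lmulS l (x * g)).

Lemma annihilator_exists B C D m l : cls B -> cls C -> cls D -> W B m -> W D l ->
  exists2 n, W C n & annihilates C m l n.
Proof.
move=> hB hC hD Wm Wl.
have [n1 [Wn1 K1]] := (hstrong hB Wm).1.2 C hC.
have [n2 [Wn2 K2]] := (hstrong hD Wl).2.2 C hC.
have [n [Wn nn1 nn2]] := Wset_meet hC Wn1 Wn2.
by exists n => //; split=> x Px g /[dup] ng; [move/nn1; apply: K1|move/nn2; apply: K2].
Qed.

Lemma partL_annihilated B C m l n x : cls B -> cls C -> W B m -> W C n ->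
  annihilates C m l n -> partL G C m x -> nAAm n m x -> rmulS m x.
Proof.
move=> hB hC Wm Wn [killL _] Px [y [z [/lmulSE [s [ns ->]] Rz Exyz]]].
apply: (part_actspan_N (left_action_mod G m) (blockL hB Wm) hC (Wset_sub hC Wn) killL Px).
  by exists s.
by rewrite /= Exyz addrAC subrr add0r.
Qed.

Lemma partR_annihilated C D m l n x : cls C -> cls D -> W D l -> W C n ->
  annihilates C m l n -> partR G C l x -> nAAm l n x -> lmulS l x.
Proof.
move=> hC hD Wl Wn [_ killR] Px [y [z [Ly /rmulSE [s [ns ->]] Exyz]]].
apply: (part_actspan_N (right_action_mod G l) (blockR hD Wl) hC (Wset_sub hC Wn) killR Px).
  by exists s.
by rewrite /= Exyz addrK.
Qed.

Lemma comp_relI B C D (al be ga : mor A) : cls B -> cls C -> cls D ->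
  (forall m l n, W B m -> W D l -> W C n -> annihilates C m l n ->
     forall a0 b0, nAAm n m (a0 - al m n) -> partL G C m a0 ->
       nAAm l n (b0 - be n l) -> partR G C l b0 -> nAAm l m (ga m l - b0 * a0)) ->
  comp_rel G B C D al be ga.
Proof.
move=> hB hC hD Hga m l Wm Wl.
have [n Wn ann] := annihilator_exists hB hC hD Wm Wl.
exists n; do !split=> //.
- by move=> x; apply: (partR_annihilated hC hD Wl Wn ann).
- move=> y; have [x [Px Qx]] := block_decomp (right_action_mod G l) (blockR hD Wl) y hC.
  by exists x; split=> //; apply: (coblockR_nAAm hC Wn Qx).
- by move=> x; apply: (partL_annihilated hB hC Wm Wn ann).
- move=> y; have [x [Px Qx]] := block_decompL y hB Wm hC.
  by exists x; split=> //; apply: (coblockL_nAAm hC Wn Qx).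
- exact: Hga.
Qed.

Section Functor.
Variable Fo : set (set A) -> lmodType k.
Local Unset Implicit Arguments.
Variable Fm : forall B C : set (set A), mor A -> Fo B -> Fo C.
Local Set Implicit Arguments.
Hypothesis hFm : is_Amodule_functor G sim Fm.

Lemma img_isMor B C a : isMor G B C (img a).
Proof. by move=> m n *; rewrite /img subrr; apply: (zmod_set0 (nAAm_zmod n m)). Qed.

Section Linearity.
Variables (B C : set (set A)) (hB : cls B) (hC : cls C).

Lemma Fm_lin al c u v : isMor G B C al ->
  Fm B C al (c *: u + v) = c *: Fm B C al u + Fm B C al v.
Proof. by move=> hal; case: hFm => Hlin _ _ _ _; apply: Hlin. Qed.

Lemma Fm0 al : isMor G B C al -> Fm B C al 0 = 0.
Proof. by move=> hal; have := Fm_lin (-1) 0 0 hal; rewrite !scaleN1r !addNr. Qed.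

Lemma Fm_sum al (I : Type) (s : seq I) (F : I -> Fo B) : isMor G B C al ->
  Fm B C al (\sum_(i <- s) F i) = \sum_(i <- s) Fm B C al (F i).
Proof.
move=> hal; elim: s => [|i s IH]; first by rewrite !big_nil Fm0.
by rewrite !big_cons -{1}[F i]scale1r Fm_lin // scale1r IH.
Qed.

Lemma Fm_morD al be c v : isMor G B C al -> isMor G B C be ->
  Fm B C (fun m n => c *: al m n + be m n) v = c *: Fm B C al v + Fm B C be v.
Proof. by move=> hal hbe; case: hFm => _ Hlin _ _ _; apply: Hlin. Qed.

Lemma Fimg_lin a b c v :
  Fm B C (img (c *: a + b)) v = c *: Fm B C (img a) v + Fm B C (img b) v.
Proof. exact (Fm_morD c v (img_isMor a) (img_isMor b)). Qed.

Lemma Fimg0 v : Fm B C (img 0) v = 0.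
Proof. by have := Fimg_lin 0 0 (-1) v; rewrite !scaleN1r !addNr. Qed.

Lemma FimgD a b v : Fm B C (img (a + b)) v = Fm B C (img a) v + Fm B C (img b) v.
Proof. by have := Fimg_lin a b 1 v; rewrite !scale1r. Qed.

Lemma Fimg_sum (I : Type) (s : seq I) (F : I -> A) v :
  Fm B C (img (\sum_(i <- s) F i)) v = \sum_(i <- s) Fm B C (img (F i)) v.
Proof.
elim: s => [|i s IH]; first by rewrite !big_nil Fimg0.
by rewrite !big_cons FimgD IH.
Qed.

Lemma isMor_sum (I : eqType) (s : seq I) (F : I -> mor A) :
  (forall i, i \in s -> isMor G B C (F i)) ->
  isMor G B C (fun m n => \sum_(i <- s) F i m n).
Proof.
move=> hF m n m' n' Wm Wn Wm' Wn' m'm n'n; rewrite -sumrB.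
by apply: (zmod_set_sum (nAAm_zmod n m)) => i si _; apply: hF.
Qed.

Lemma Fm_morsum (I : eqType) (s : seq I) (F : I -> mor A) v :
  (forall i, i \in s -> isMor G B C (F i)) ->
  Fm B C (fun m n => \sum_(i <- s) F i m n) v = \sum_(i <- s) Fm B C (F i) v.
Proof.
elim: s => [|i s IH] hF.
  rewrite big_nil -(Fimg0 v); congr (Fm B C _ v).
  by apply/funext => m; apply/funext => n; rewrite big_nil.
have hFs j : j \in s -> isMor G B C (F j) by move=> js; apply: hF; rewrite in_cons js orbT.
rewrite big_cons -IH // -[Fm B C (F i) v]scale1r -Fm_morD.
- by congr (Fm B C _ v); apply/funext => m; apply/funext => n; rewrite big_cons scale1r.
- by apply: hF; rewrite mem_head.
- exact: isMor_sum.
Qed.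

Lemma Fimg_eq x y v : (forall m n, W B m -> W C n -> nAAm n m (x - y)) ->
  Fm B C (img x) v = Fm B C (img y) v.
Proof.
case: hFm => _ _ Hwd _ _ xy.
exact: (Hwd B C (img x) (img y) hB hC (img_isMor x) (img_isMor y) xy).
Qed.

End Linearity.

Lemma Fimg1 B v : cls B -> Fm B B (img 1) v = v.
Proof. by move=> hB; case: hFm => _ _ _ Hid _; apply: Hid. Qed.

Lemma Fm_comp B C D al be ga v : cls B -> cls C -> cls D ->
  isMor G B C al -> isMor G C D be -> isMor G B D ga -> comp_rel G B C D al be ga ->
  Fm B D ga v = Fm C D be (Fm B C al v).
Proof. by case: hFm => _ _ _ _ Hcomp *; apply: Hcomp. Qed.

Lemma Fimg_offdiag B C g v : cls B -> cls C -> B <> C -> G g ->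
  Fm B C (img g) v = 0.
Proof.
move=> hB hC BC Gg; rewrite (Fimg_eq hB hC (y := 0)) ?Fimg0 // => m n Wm Wn.
have [p [q [mp nq pq1]]] := Wset_comaximal hB hC BC Wm Wn.
exists (g * q), (g * p); split.
- exact/lmulS_sub/(idealMl (Wset_ideal hC Wn)).
- by apply/rmulSE; exists [:: (p, g)]; rewrite big_seq1; split=> // r /[!inE] /eqP ->.
- by rewrite subr0 -mulrDr addrC pq1 mulr1.
Qed.

(* A basic open neighbourhood of [(0)] in [A(B,B)] is determined by finitely
   many ideals of W(B); their product is sent into it by [(_)]. *)
Lemma img_continuity_kill B (s : seq (set A * set A)) : cls B ->
  (forall p, List.In p s -> W B p.1 /\ W B p.2) ->
  exists2 m, W B m & forall g, m g ->
    forall p, List.In p s -> nAAm p.2 p.1 (img g p.1 p.2 - img 0 p.1 p.2).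
Proof.
move=> hB Ws.
have [m [Wm ms]] : exists m, W B m /\ forall m', m' \in [seq p.2 | p <- s] -> m `<=` m'.
  by apply: (Wset_meet_seq hB) => _ /mapP [p /In_mem /Ws [_ Wp] ->].
exists m => // g mg p /In_mem sp; rewrite /img subr0.
exact/nAAm_l/lmulS_sub/(ms p.2 (map_f _ sp)).
Qed.

Lemma Fimg_kill_discrete B : discrete_module G sim Fm -> cls B ->
  exists2 m, W B m & forall g, m g -> forall v, Fm B B (img g) v = 0.
Proof.
move=> [_ Hc] hB; have [s [Ws Hs]] := Hc B B (img 0) hB hB (img_isMor 0).
have [m Wm mkill] := img_continuity_kill hB Ws.
by exists m => // g mg v; rewrite -(Fimg0 hB hB v); apply: Hs (img_isMor g) (mkill g mg) v.
Qed.

Lemma Fimg_mulr_subalg B C x g v : cls B -> cls C -> G g ->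
  Fm B C (img (x * g)) v = Fm B C (img x) (Fm B B (img g) v).
Proof.
move=> hB hC Gg; apply: Fm_comp => //; try exact: img_isMor.
apply: comp_relI => // m l n Wm Wl Wn ann a0 b0 Ha Pa Hb Pb.
have ga0 : rmulS m (g - a0).
  apply: (partL_annihilated hB hB Wm Wn ann).
    exact: (zmod_setB (partL_zmod m hB) (partL_subalg hB Wm Gg) Pa).
  by rewrite -opprB; apply: (zmod_setN (nAAm_zmod n m)).
have -> : x * g - b0 * a0 = x * (g - a0) + (x - b0) * a0.
  by rewrite mulrBr mulrBl addrA subrK.
apply: (zmod_setD (nAAm_zmod l m)); first exact/nAAm_r/rmulSMl.
apply: (nAAmMr (ann.1 a0 Pa)).
by rewrite -opprB; apply: (zmod_setN (nAAm_zmod l n)).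
Qed.

Lemma Fimg_mull_subalg B C x g v : cls B -> cls C -> G g ->
  Fm B C (img (g * x)) v = Fm C C (img g) (Fm B C (img x) v).
Proof.
move=> hB hC Gg; apply: Fm_comp => //; try exact: img_isMor.
apply: comp_relI => // m l n Wm Wl Wn ann a0 b0 Ha Pa Hb Pb.
have gb0 : lmulS l (b0 - g).
  apply: (partR_annihilated hC hC Wl Wn ann) => //.
  exact: (zmod_setB (partR_zmod l hC) Pb (partR_subalg hC Wl Gg)).
have -> : g * x - b0 * a0 = (g - b0) * x + b0 * (x - a0).
  by rewrite mulrBr mulrBl addrA subrK.
apply: (zmod_setD (nAAm_zmod l m)).
  by apply/nAAm_l/lmulSMr; rewrite -opprB; apply: (zmod_setN (lmulS_zmod l)).
apply: (nAAmMl (ann.2 b0 Pb)).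
by rewrite -opprB; apply: (zmod_setN (nAAm_zmod n m)).
Qed.

Definition projL (C : set (set A)) (x : A) (m : set A) : A :=
  xget 0 [set y | partL G C m y /\ coblockL m C (x - y)].

Lemma projL_spec B C m x : cls B -> W B m -> cls C ->
  partL G C m (projL C x m) /\ coblockL m C (x - projL C x m).
Proof. move=> hB Wm hC; exact: (xgetPex 0 (block_decompL x hB Wm hC)). Qed.

(* Representatives of the composite [(y) o (x)] through the block [C]. *)
Definition proj_mor (y : A) (C : set (set A)) (x : A) : mor A :=
  fun m _ => y * projL C x m.

Lemma proj_mor_isMor B C D x y : cls B -> cls C -> isMor G B D (proj_mor y C x).
Proof.
move=> hB hC m n m' n' Wm Wn Wm' Wn' m'm _; apply/nAAm_r; rewrite -mulrBr; apply: rmulSMl.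
have [P1 Q1] := projL_spec x hB Wm hC; have [P2 Q2] := projL_spec x hB Wm' hC.
apply: (partL_coblockL_rmulS hB Wm hC).
  exact: (zmod_setB (partL_zmod m hC) (partL_mono m'm P2) P1).
rewrite -(subrBB x); apply: (zmod_setB (coblock_zmod (left_action_mod G m) C) Q1).
exact: (coblockL_mono m'm Q2).
Qed.

Lemma Fimg_comp_proj B C D x y v : cls B -> cls C -> cls D ->
  Fm B D (proj_mor y C x) v = Fm C D (img y) (Fm B C (img x) v).
Proof.
move=> hB hC hD; apply: Fm_comp => //; try exact: img_isMor; first exact: proj_mor_isMor.
apply: comp_relI => // m l n Wm Wl Wn ann a0 b0 Ha Pa Hb Pb.
have [Ppi Qpi] := projL_spec x hB Wm hC.
have a0pi : rmulS m (a0 - projL C x m).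
  apply: (partL_annihilated hB hC Wm Wn ann); first exact: (zmod_setB (partL_zmod m hC) Pa Ppi).
  rewrite -[a0](subrK x) -addrA; apply: (zmod_setD (nAAm_zmod n m) Ha).
  exact: (coblockL_nAAm hC Wn Qpi).
rewrite /proj_mor; have -> : y * projL C x m - b0 * a0 = y * (projL C x m - a0) + (y - b0) * a0.
  by rewrite mulrBr mulrBl addrA subrK.
apply: (zmod_setD (nAAm_zmod l m)).
  by apply/nAAm_r/rmulSMl; rewrite -opprB; apply: (zmod_setN (rmulS_zmod m)).
apply: (nAAmMr (ann.1 a0 Pa)).
by rewrite -opprB; apply: (zmod_setN (nAAm_zmod l n)).
Qed.

Lemma Fimg_rmulS_kill B C m z v : cls B -> cls C -> W B m ->
  (forall g, m g -> Fm B B (img g) v = 0) -> rmulS m z -> Fm B C (img z) v = 0.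
Proof.
move=> hB hC Wm mkill /rmulSE [s [ms ->]].
rewrite (Fimg_sum hB hC) big1_seq // => p /andP [_ /ms mp].
by rewrite Fimg_mulr_subalg ?mkill ?Fm0 //; [exact: img_isMor | exact: (Wset_sub hB Wm mp)].
Qed.

Lemma projL_sum B m x : cls B -> W B m ->
  exists2 S0 : seq (set (set A)), (forall C, C \in S0 -> cls C) &
    forall S, {subset S0 <= S} -> uniq S -> (forall C, C \in S -> cls C) ->
      rmulS m (\sum_(C <- S) projL C x m - x).
Proof.
move=> hB Wm; have [n [Bs [vs [hBs Pvs Nx]]]] := blockL_decomp x hB Wm.
exists [seq Bs i | i <- index_enum 'I_n] => [_ /mapP [i _ ->] //|S S0S uS hS].
have piC C : C \in S -> rmulS m (projL C x m - \sum_(i < n | Bs i == C) vs i).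
  move=> /hS hC; have [Ppi Qpi] := projL_spec x hB Wm hC.
  have hQ := coblock_zmod (left_action_mod G m) C.
  have PC : partL G C m (\sum_(i < n | Bs i == C) vs i).
    by apply/(zmod_set_sum (partL_zmod m hC)) => i _ /eqP <-; apply: Pvs.
  have QC : coblockL m C (x - \sum_(i < n | Bs i == C) vs i).
    have -> : x - \sum_(i < n | Bs i == C) vs i =
        (x - \sum_(i < n) vs i) + \sum_(i < n | Bs i != C) vs i.
      by rewrite [in RHS](bigID (fun i => Bs i == C)) /= opprD addrA subrK.
    apply: (zmod_setD hQ); first exact: coblock_N.
    apply/(zmod_set_sum hQ) => i _ /eqP BiC.
    exact: (coblock_part (left_action_mod G m) (hBs i) BiC (Pvs i)).
  apply: (partL_coblockL_rmulS hB Wm hC); first exact: (zmod_setB (partL_zmod m hC) Ppi PC).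
  rewrite -(subrBB x); exact: (zmod_setB hQ QC Qpi).
have sum_vs : \sum_(C <- S) \sum_(i < n | Bs i == C) vs i = \sum_(i < n) vs i.
  under eq_bigr do rewrite big_mkcond; rewrite exchange_big /=; apply: eq_bigr => i _.
  by apply: sum_pick => //; apply/S0S/map_f; rewrite mem_index_enum.
have -> : \sum_(C <- S) projL C x m - x =
    \sum_(C <- S) (projL C x m - \sum_(i < n | Bs i == C) vs i) + (\sum_(i < n) vs i - x).
  by rewrite sumrB sum_vs addrA subrK.
apply: (zmod_setD (rmulS_zmod m)); first by apply/(zmod_set_sum (rmulS_zmod m)) => C /piC.
by rewrite -opprB; apply: (zmod_setN (rmulS_zmod m)).
Qed.

Section Profinite.
Hypothesis hF : profinite_module G sim Fm.

Lemma Fimg_kill B v : cls B -> exists2 m, W B m & forall g, m g -> Fm B B (img g) v = 0.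
Proof.
move=> hB; have [_ Hc] := hF.
have [s [Ws Hs]] := Hc B B (img 0) hB hB (img_isMor 0) 1 (fun _ => v).
have [m Wm mkill] := img_continuity_kill hB Ws.
by exists m => // g mg; rewrite -(Fimg0 hB hB v); apply: Hs (img_isMor g) (mkill g mg) ord0.
Qed.

(* [z] is killed modulo [A m] by some [p] with [1 - p] killing [F(z) v]. *)
Lemma Fimg_part_offdiag B C C' m z v : cls B -> cls C -> cls C' -> C' <> C -> W B m ->
  (forall g, m g -> Fm B B (img g) v = 0) -> partL G C' m z -> Fm B C (img z) v = 0.
Proof.
move=> hB hC hC' C'C Wm mkill [_ [m' [Wm' m'z]]].
have [n Wn nkill] := Fimg_kill (Fm B C (img z) v) hC.
have [p [q [m'p nq pq1]]] := Wset_comaximal hC' hC C'C Wm' Wn.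
rewrite -(Fimg1 (Fm B C (img z) v) hC) -pq1 (FimgD hC hC) (nkill q nq) addr0.
rewrite -Fimg_mull_subalg //; last exact: (Wset_sub hC' Wm' m'p).
exact: (Fimg_rmulS_kill hB hC Wm mkill (m'z p m'p)).
Qed.

Lemma Fimg_finite_support x B v : cls B ->
  exists2 S : seq (set (set A)), (forall C, C \in S -> cls C) &
    forall C, cls C -> C \notin S -> Fm B C (img x) v = 0.
Proof.
move=> hB; have [m Wm mkill] := Fimg_kill v hB.
have [n [Bs [vs [hBs Pvs Nx]]]] := blockL_decomp x hB Wm.
exists [seq Bs i | i <- index_enum 'I_n] => [_ /mapP [i _ ->] //|C hC CS].
have -> : x = (x - \sum_(i < n) vs i) + \sum_(i < n) vs i by rewrite subrK.
rewrite FimgD // (Fimg_rmulS_kill hB hC Wm mkill Nx) add0r Fimg_sum // big1 // => i _.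
apply: (Fimg_part_offdiag hB hC (hBs i) _ Wm mkill (Pvs i)).
by move=> BiC; move: CS; rewrite -BiC map_f // mem_index_enum.
Qed.

(* Continuity reduces [(y x)] to finitely many [m], at which [x] is the sum of
   its block components [projL C x m]. *)
Lemma Fimg_mul_sum B D x y v : cls B -> cls D ->
  exists2 S0 : seq (set (set A)), (forall C, C \in S0 -> cls C) &
    forall S, {subset S0 <= S} -> uniq S -> (forall C, C \in S -> cls C) ->
      Fm B D (img (y * x)) v = \sum_(C <- S) Fm C D (img y) (Fm B C (img x) v).
Proof.
move=> hB hD; have [_ Hc] := hF.
have [s [Ws Hs]] := Hc B D (img (y * x)) hB hD (img_isMor _) 1 (fun _ => v).
have [S0 hS0 HS0] : exists2 S0 : seq (set (set A)), (forall C, C \in S0 -> cls C) &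
    forall S, {subset S0 <= S} -> forall m, m \in [seq p.1 | p <- s] ->
      uniq S -> (forall C, C \in S -> cls C) -> rmulS m (\sum_(C <- S) projL C x m - x).
  apply: cover_seq => _ /mapP [p /In_mem /Ws [Wp _] ->]; exact: (projL_sum x hB Wp).
exists S0 => // S S0S uS hS.
have hbe : forall C, C \in S -> isMor G B D (proj_mor y C x).
  by move=> C /hS; apply: proj_mor_isMor.
rewrite -(Hs _ (isMor_sum hbe) _ ord0) /= ?Fm_morsum //.
  by apply: eq_big_seq => C /hS hC; apply: Fimg_comp_proj.
move=> p /[dup] /In_mem ps /Ws [Wp1 _]; apply/nAAm_r.
rewrite /proj_mor /img -mulr_sumr -mulrBr; apply/rmulSMl/HS0 => //.
exact: map_f.
Qed.

Notation carrier := (HF_carrier G sim (Fo := Fo)).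

Lemma dfunDE (f g : dfun Fo) B : (f + g) B = f B + g B. Proof. by []. Qed.
Lemma dfunZE c (f : dfun Fo) B : (c *: f) B = c *: f B. Proof. by []. Qed.
Lemma dfunNE (f : dfun Fo) B : (- f) B = - f B. Proof. by []. Qed.
Lemma dfun0E B : (0 : dfun Fo) B = 0. Proof. by []. Qed.

Lemma dfun_sumE (I : Type) (s : seq I) (F : I -> dfun Fo) B :
  (\sum_(i <- s) F i) B = \sum_(i <- s) F i B.
Proof. by elim: s => [|i s IH]; rewrite ?big_nil // !big_cons dfunDE IH. Qed.

Definition supp (f : dfun Fo) : seq (set (set A)) :=
  undup [seq B <- xget [::] [set s | forall B, ~ List.In B s -> f B = 0] | f B != 0].

Lemma supp_uniq f : uniq (supp f). Proof. exact: undup_uniq. Qed.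

Lemma mem_supp f B : carrier f -> (B \in supp f) = (f B != 0).
Proof.
move=> [_ fin]; rewrite mem_undup mem_filter andb_idr // => fB.
have /= fs := xgetPex [::] fin.
by apply/In_mem; apply: contrapT => /fs /eqP; rewrite (negPf fB).
Qed.

Lemma supp_class f B : carrier f -> B \in supp f -> cls B.
Proof.
move=> hf; rewrite mem_supp // => fB; apply: contrapT => nB.
by move: fB; rewrite hf.1 ?eqxx.
Qed.

Lemma carrier_lin c f g : carrier f -> carrier g -> carrier (c *: f + g).
Proof.
move=> [f0 [sf fs]] [g0 [sg gs]]; split.
  by move=> B nB; rewrite dfunDE dfunZE f0 // g0 // scaler0 addr0.
exists (sf ++ sg) => B nB; rewrite dfunDE dfunZE fs ?gs ?scaler0 ?addr0 //.
  by move=> Bsg; apply: nB; apply: List.in_or_app; right.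
by move=> Bsf; apply: nB; apply: List.in_or_app; left.
Qed.

Definition actH (a : A) (f : dfun Fo) : dfun Fo := fun C =>
  if pselect (cls C) then \sum_(B <- supp f) Fm B C (img a) (f B) else 0.

Lemma actH_nclass a f C : ~ cls C -> actH a f C = 0.
Proof. by rewrite /actH; case: pselect. Qed.

Lemma actH_class a f C : cls C -> actH a f C = \sum_(B <- supp f) Fm B C (img a) (f B).
Proof. by rewrite /actH; case: pselect. Qed.

Lemma actH_sum a f C S : cls C -> carrier f -> uniq S ->
  {subset supp f <= S} -> (forall B, B \in S -> cls B) ->
  actH a f C = \sum_(B <- S) Fm B C (img a) (f B).
Proof.
move=> hC hf uS fS hS; rewrite actH_class //; apply: sum_uniq_sub => // [|B BS].
  exact: supp_uniq.
by rewrite mem_supp // negbK => /eqP ->; rewrite Fm0 //; [exact: hS|exact: img_isMor].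
Qed.

Lemma actH_single a f B C : cls B -> carrier f -> (forall C, C <> B -> f C = 0) -> cls C ->
  actH a f C = Fm B C (img a) (f B).
Proof.
move=> hB hf fB hC; rewrite (actH_sum a hC hf (S := [:: B])) ?big_seq1 //.
  by move=> B'; rewrite mem_supp // mem_seq1; apply: contraR => /eqP /fB ->.
by move=> B'; rewrite mem_seq1 => /eqP ->.
Qed.

Lemma actH_subalg g f C : G g -> carrier f -> cls C -> actH g f C = Fm C C (img g) (f C).
Proof.
move=> Gg hf hC; have hS B : B \in undup (C :: supp f) -> cls B.
  by rewrite mem_undup in_cons => /orP [/eqP ->|/(supp_class hf)].
rewrite (actH_sum g hC hf (S := undup (C :: supp f))) ?undup_uniq //; last first.
  by move=> B Bf; rewrite mem_undup in_cons Bf orbT.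
rewrite (bigD1_seq C) ?undup_uniq ?mem_undup ?mem_head //= big1_seq ?addr0 // => B.
by move=> /andP [BC /hS hB]; apply: Fimg_offdiag => // /eqP; rewrite (negPf BC).
Qed.

Lemma actH_carrier a f : carrier f -> carrier (actH a f).
Proof.
move=> hf; split=> [C|]; first exact: actH_nclass.
have [L _ HL] : exists2 L : seq (set (set A)), (forall C, C \in L -> cls C) &
    forall S : seq (set (set A)), {subset L <= S} -> forall B, B \in supp f ->
      forall C, cls C -> C \notin S -> Fm B C (img a) (f B) = 0.
  apply: cover_seq => B /(supp_class hf) hB.
  have [S0 hS0 S0f] := Fimg_finite_support a (f B) hB.
  by exists S0 => // S S0S C hC CS; apply: S0f => //; apply: contra CS; apply: S0S.
exists L => C CL; case: (pselect (cls C)) => hC; last exact: actH_nclass.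
rewrite actH_class // big1_seq // => B /andP [_ Bf]; apply: (HL L) => //.
by apply/negP => /In_mem.
Qed.

Lemma actH_linear a c f g : carrier f -> carrier g ->
  actH a (c *: f + g) = c *: actH a f + actH a g.
Proof.
move=> hf hg; have hh := carrier_lin c hf hg.
apply: functional_extensionality_dep => C; rewrite dfunDE dfunZE.
case: (pselect (cls C)) => hC; last by rewrite !actH_nclass // scaler0 addr0.
pose S := undup (supp (c *: f + g) ++ supp f ++ supp g).
have hS B : B \in S -> cls B.
  by rewrite mem_undup !mem_cat => /orP [/(supp_class hh)|/orP [/(supp_class hf)|/(supp_class hg)]].
have sub1 : {subset supp (c *: f + g) <= S} by move=> B B1; rewrite mem_undup mem_cat B1.
have sub2 : {subset supp f <= S} by move=> B B2; rewrite mem_undup !mem_cat B2 orbT.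
have sub3 : {subset supp g <= S} by move=> B B3; rewrite mem_undup !mem_cat B3 !orbT.
rewrite (actH_sum a hC hh (undup_uniq _) sub1 hS) (actH_sum a hC hf (undup_uniq _) sub2 hS).
rewrite (actH_sum a hC hg (undup_uniq _) sub3 hS).
rewrite scaler_sumr -big_split /=; apply: eq_big_seq => B BS.
by rewrite dfunDE dfunZE Fm_lin //; [exact: hS|exact: img_isMor].
Qed.

Lemma actH_linear_op a b c f : carrier f -> actH (c *: a + b) f = c *: actH a f + actH b f.
Proof.
move=> hf; apply: functional_extensionality_dep => C; rewrite dfunDE dfunZE.
case: (pselect (cls C)) => hC; last by rewrite !actH_nclass // scaler0 addr0.
rewrite !actH_class // scaler_sumr -big_split; apply: eq_big_seq => B /(supp_class hf) hB.
exact: Fimg_lin.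
Qed.

Lemma actH1 f : carrier f -> actH 1 f = f.
Proof.
move=> hf; apply: functional_extensionality_dep => C.
case: (pselect (cls C)) => hC; last by rewrite actH_nclass // hf.1.
by rewrite actH_subalg ?Fimg1 //; apply: subalg1.
Qed.

Lemma actH_mul a b f : carrier f -> actH (a * b) f = actH a (actH b f).
Proof.
move=> hf; have hg := actH_carrier b hf.
apply: functional_extensionality_dep => D.
case: (pselect (cls D)) => hD; last by rewrite !actH_nclass.
have [L hL HL] : exists2 L : seq (set (set A)), (forall C, C \in L -> cls C) &
    forall S, {subset L <= S} -> forall B, B \in supp f -> uniq S -> (forall C, C \in S -> cls C) ->
      Fm B D (img (a * b)) (f B) = \sum_(C <- S) Fm C D (img a) (Fm B C (img b) (f B)).
  by apply: cover_seq => B /(supp_class hf) hB; apply: Fimg_mul_sum.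
pose S := undup (L ++ supp (actH b f)).
have hS C : C \in S -> cls C by rewrite mem_undup mem_cat => /orP [/hL|/(supp_class hg)].
have LS : {subset L <= S} by move=> C CL; rewrite mem_undup mem_cat CL.
have gS : {subset supp (actH b f) <= S} by move=> C Cg; rewrite mem_undup mem_cat Cg orbT.
rewrite actH_class // (actH_sum a hD hg (undup_uniq _) gS hS).
rewrite (eq_big_seq _ (fun B Bf => HL S LS B Bf (undup_uniq _) hS)).
rewrite exchange_big /=; apply: eq_big_seq => C /hS hC.
by rewrite actH_class // Fm_sum //; apply: img_isMor.
Qed.

Lemma actH_Amod : is_Amod carrier actH.
Proof.
split=> [a f|a c f g|a b c f|f|a b f]; first exact: actH_carrier.
- exact: actH_linear.
- exact: actH_linear_op.
- exact: actH1.
- exact: actH_mul.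
Qed.

(* Comaximality of W(B) and W(C) gives [p + q = 1] with [p] killing [f] and
   [q] killing [f C]; so [f C = (p).(f C)], which is the [C]-component of [p.f]. *)
Lemma killed_concentrated f B m : cls B -> carrier f -> W B m ->
  (forall g, m g -> actH g f = 0) -> forall C, C <> B -> f C = 0.
Proof.
move=> hB hf Wm mkill C CB.
case: (pselect (cls C)) => hC; last exact: hf.1.
have [n Wn nkill] := Fimg_kill (f C) hC.
have [p [q [mp nq pq1]]] := Wset_comaximal hB hC (nesym CB) Wm Wn.
rewrite -(Fimg1 (f C) hC) -pq1 (FimgD hC hC) (nkill q nq) addr0.
by rewrite -actH_subalg ?mkill //; apply: (Wset_sub hB Wm).
Qed.

Definition projH (B : set (set A)) (f : dfun Fo) : dfun Fo :=
  fun C => if C == B then f C else 0.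

Lemma projH_carrier B f : carrier f -> carrier (projH B f).
Proof.
move=> [f0 _]; split=> [C nC|]; first by rewrite /projH f0 //; case: eqP.
by exists [:: B] => C nC; rewrite /projH; case: eqP => // CB; case: nC; left.
Qed.

Lemma projH_concentrated B f C : C <> B -> projH B f C = 0.
Proof. by rewrite /projH => /eqP /negPf ->. Qed.

Lemma actH_subalg_concentrated g f B C : G g -> cls B -> carrier f ->
  (forall C, C <> B -> f C = 0) -> C <> B -> actH g f C = 0.
Proof.
move=> Gg hB hf fB CB; case: (pselect (cls C)) => hC; last exact: actH_nclass.
by rewrite actH_subalg // fB // Fm0 //; apply: img_isMor.
Qed.

Lemma projH_part B f : cls B -> carrier f ->
  bpart G carrier (fun v => v = 0) actH B (projH B f).
Proof.
move=> hB hf; have hp := projH_carrier B hf; split=> //.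
have [m Wm mkill] := Fimg_kill (f B) hB; exists m; split=> // g mg.
have Gg := Wset_sub hB Wm mg.
apply: functional_extensionality_dep => C; rewrite dfun0E.
have [->|CB] := pselect (C = B).
  by rewrite actH_subalg // /projH eqxx mkill.
exact: (actH_subalg_concentrated Gg hB hp (@projH_concentrated B f)).
Qed.

Lemma actH_block : block_mod G sim carrier (fun v => v = 0) actH.
Proof.
split=> [f hf|n Bs vs hBs injBs Pvs sum0 i].
  pose Bs (i : 'I_(size (supp f))) := nth set0 (supp f) i.
  have hBs i : cls (Bs i) by apply/(supp_class hf)/mem_nth.
  exists (size (supp f)), Bs, (fun i => projH (Bs i) f); split=> // [i j|i|].
  - by move/eqP; rewrite nth_uniq ?supp_uniq // => /eqP /val_inj.
  - exact: projH_part.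
  apply: functional_extensionality_dep => C; rewrite dfunDE dfunNE dfun_sumE dfun0E.
  rewrite -(big_mkord xpredT (fun i => projH (nth set0 (supp f) i) f C)).
  rewrite -(big_nth set0 xpredT (fun B => projH B f C)).
  rewrite /projH; case: (boolP (C \in supp f)) => Cf.
    by rewrite sum_pick ?supp_uniq // subrr.
  rewrite big1_seq ?subr0 => [|B /andP [_ Bf]]; last by case: eqP => // CB; move: Cf; rewrite CB Bf.
  by apply/eqP; rewrite -[_ == 0]negbK -mem_supp.
have conc j : forall C, C <> Bs j -> vs j C = 0.
  by have [hv [m [Wm mkill]]] := Pvs j; apply: (killed_concentrated (hBs j) hv Wm mkill).
apply: functional_extensionality_dep => C; rewrite dfun0E.
have [->|CB] := pselect (C = Bs i); last exact: conc.
have := f_equal (fun h : dfun Fo => h (Bs i)) sum0; rewrite /= dfun_sumE dfun0E.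
rewrite (bigD1 i) //= big1 ?addr0 // => j ji; apply: conc => Bij.
by move: ji; rewrite (injBs _ _ Bij) eqxx.
Qed.

Lemma actH_strong_block : discrete_module G sim Fm ->
  strong_block_mod G sim carrier (fun v => v = 0) actH.
Proof.
move=> hdisc; split=> [|B hB]; first exact: actH_block.
have [m Wm mkill] := Fimg_kill_discrete hdisc hB.
exists m; split=> // f [hf [m' [Wm' m'kill]]] g mg.
have Gg := Wset_sub hB Wm mg; have fB := killed_concentrated hB hf Wm' m'kill.
apply: functional_extensionality_dep => C; rewrite dfun0E.
have [->|CB] := pselect (C = B); last exact: (actH_subalg_concentrated Gg hB hf fB).
by rewrite actH_subalg // mkill.
Qed.

End Profinite.

End Functor.

End StrongBlockSubalgebra.
End Blocks.
Theorem mainTheorem13 (k : fieldType) (A : algType k) (G : set A)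
    (sim : set A -> set A -> Prop)
    (Fo : set (set A) -> lmodType k)
    (Fm : forall B C : set (set A), mor A -> Fo B -> Fo C) :
  subalgebra G ->
  equiv_on_cfs G sim ->
  strong_HC_block_subalg G sim ->
  profinite_module G sim Fm ->
  (* for a in A and v in F(B), F_{B,C}((a)) v is nonzero for finitely many C *)
  (forall (a : A) (B : set (set A)) (v : Fo B), is_class G sim B ->
     exists s : seq (set (set A)), forall C, is_class G sim C ->
       ~ List.In C s -> Fm B C (img a) v = 0) /\
  (* H(F) = (+)_B F(B), with a.v = sum_C F_{B,C}((a)) v for v in F(B),
     is a Harish-Chandra block module, and a strong one if F is discrete *)
  (exists act : A -> dfun Fo -> dfun Fo,
     (forall (a : A) (B : set (set A)) (f : dfun Fo),
        is_class G sim B -> HF_carrier G sim (Fo:=Fo) f ->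
        (forall C, C <> B -> f C = 0) ->
        forall C, is_class G sim C -> act a f C = Fm B C (img a) (f B)) /\
     HC_block_mod G sim (HF_carrier G sim (Fo:=Fo)) act /\
     (discrete_module G sim Fm -> strong_HC_block_mod G sim (HF_carrier G sim (Fo:=Fo)) act)).
Proof.
move=> hG hsim hstrong hF; have hFm := hF.1.
split=> [a B v hB|].
  have [S _ SC] := Fimg_finite_support hG hsim hstrong hFm hF a v hB.
  by exists S => C hC CS; apply: SC => //; apply/negP => /In_mem.
exists (actH G sim Fm); split; first by move=> a B f hB hf fB C hC; apply: actH_single.
have hAmod := actH_Amod hG hsim hstrong hFm hF.
split; first by split; last exact: actH_block.
by move=> hdisc; split; last exact: actH_strong_block.
Qed.
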